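(* Let $m\geq 1$ be an integer. For all integers $n\geq 1$ and all real $x\in(0,\pi)$, $$\sum_{\substack{k=0\\ k \text{ even}}}^n \binom{n-k+m}{m}\cos\bigl((k+1/2)x\bigr)>0 \qquad\text{and}\qquad \sum_{\substack{k=0\\ k \text{ even}}}^n \binom{n-k+m}{m}\sin\bigl((k+1/2)x\bigr)>0.$$ In both cases the lower bound $0$ is sharp. *)

From Stdlib Require Import Reals Arith.
Open Scope R_scope.

Definition S_cos (m n : nat) (x : R) : R :=
  sum_f_R0 (fun k => if Nat.even k
                     then C (n - k + m) m * cos ((INR k + 1/2) * x)
                     else 0) n.

Definition S_sin (m n : nat) (x : R) : R :=
  sum_f_R0 (fun k => if Nat.even k
                     then C (n - k + m) m * sin ((INR k + 1/2) * x)
                     else 0) n.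

From Stdlib Require Import Reals Arith Lia Lra.
Open Scope R_scope.

(* The cosine sum is the sine sum at PI - x, so only S_sin matters.  The
   weights C(n-k+m, m) satisfy Pascal's rule, which gives
     S_sin (m+1) (n+1) = S_sin (m+1) n + S_sin m (n+1),
   so positivity for every m >= 1 follows by induction from the case m = 1.

   For m = 0 the sum telescopes after multiplication by 2 sin x (a
   Dirichlet-kernel identity).  Summing once more by Pascal's rule gives a
   Fejer-type closed form: 4 sin^2 x * S_sin 1 n x is a sum of two values of
     G x k = cos(x/2) (k sin x - sin(k x)) + sin(x/2) (1 - cos(k x)),
   which is positive for k >= 1 and 0 < x < PI since |sin(k x)| <= k sin x.
   In these closed forms 2 * Nat.div2 n is the last even index <= n.

   Sharpness is witnessed by n = 1, where S_sin m 1 x = C(m+1, m) sin(x/2)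
   tends to 0 with x. *)

Lemma C_n_0 n : C n 0 = 1.
Proof.
  unfold C. rewrite Nat.sub_0_r. simpl fact. rewrite Rmult_1_l.
  field. apply INR_fact_neq_0.
Qed.

Lemma C_n_n n : C n n = 1.
Proof.
  unfold C. rewrite Nat.sub_diag. simpl fact. rewrite Rmult_1_r.
  field. apply INR_fact_neq_0.
Qed.

Lemma C_pos n k : 0 < C n k.
Proof.
  unfold C. apply Rdiv_lt_0_compat; [apply INR_fact_lt_0|].
  apply Rmult_lt_0_compat; apply INR_fact_lt_0.
Qed.

Lemma S_sin_pascal m n x :
  S_sin (S m) (S n) x = S_sin (S m) n x + S_sin m (S n) x.
Proof.
  unfold S_sin. rewrite !tech5, Nat.sub_diag, !Nat.add_0_l, !C_n_n.
  rewrite <- Rplus_assoc. f_equal. rewrite <- sum_plus. apply sum_eq.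
  intros k Hk. destruct (Nat.even k); [|ring].
  replace (S n - k + S m)%nat with (S (n - k + S m)) by lia.
  replace (S n - k + m)%nat with (n - k + S m)%nat by lia.
  rewrite <- pascal by lia. ring.
Qed.

(* Reflection x |-> PI - x exchanges cos((k+1/2)x) and sin((k+1/2)x) for even k. *)
Lemma S_cos_reflect m n x : S_cos m n x = S_sin m n (PI - x).
Proof.
  unfold S_cos, S_sin. apply sum_eq. intros k _.
  destruct (Nat.even k) eqn:E; [|reflexivity].
  apply Nat.even_spec in E. destruct E as [j ->]. f_equal.
  rewrite <- sin_shift, <- (sin_period (PI/2 - _) j). f_equal.
  rewrite mult_INR. simpl INR. field.
Qed.

Lemma S_sin_at_0 m x : S_sin m 0 x = sin (x/2).
Proof.
  unfold S_sin. simpl. rewrite C_n_n. replace ((0 + 1/2) * x) with (x/2) by field.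
  ring.
Qed.

Lemma S_sin_at_1 m x : S_sin m 1 x = C (S m) m * sin (x/2).
Proof.
  unfold S_sin. simpl. replace ((0 + 1/2) * x) with (x/2) by field. ring.
Qed.

Lemma sum_even_terms (f : nat -> R) n :
  sum_f_R0 (fun k => if Nat.even k then f k else 0) n
  = sum_f_R0 (fun j => f (2 * j)%nat) (Nat.div2 n).
Proof.
  set (g := fun k => if Nat.even k then f k else 0).
  set (h := fun j => f (2 * j)%nat).
  assert (odd_zero : forall N, g (S (2 * N)) = 0).
  { intro N. unfold g. replace (S (2 * N)) with (2 * N + 1)%nat by lia.
    now rewrite Nat.even_odd. }
  assert (pairs : forall N, sum_f_R0 g (2 * N) = sum_f_R0 h N
                            /\ sum_f_R0 g (S (2 * N)) = sum_f_R0 h N).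
  { induction N as [|N [IHe IHo]].
    - unfold g, h. simpl. split; ring.
    - replace (2 * S N)%nat with (S (S (2 * N))) by lia.
      assert (Heven : sum_f_R0 g (S (S (2 * N))) = sum_f_R0 h (S N)).
      { rewrite tech5, IHo. simpl (sum_f_R0 h (S N)). f_equal.
        unfold g, h. replace (S (S (2 * N))) with (2 * S N)%nat by lia.
        now rewrite Nat.even_even. }
      split; [exact Heven|]. rewrite tech5, Heven.
      replace (S (S (S (2 * N)))) with (S (2 * S N)) by lia.
      rewrite odd_zero. ring. }
  destruct (Nat.Even_or_Odd n) as [[N ->]|[N ->]].
  - rewrite Nat.div2_double. apply pairs.
  - rewrite Nat.div2_odd'. replace (2 * N + 1)%nat with (S (2 * N)) by lia.
    apply pairs.
Qed.

Lemma prod_sin_sin a b : 2 * sin b * sin a = cos (a - b) - cos (a + b).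
Proof. rewrite cos_minus, cos_plus. ring. Qed.

(* Telescoping: 2 sin x sin((2j+1/2)x) = cos((2j-1/2)x) - cos((2j+3/2)x). *)
Lemma sin_telescope x N :
  2 * sin x * sum_f_R0 (fun j => sin ((INR (2 * j) + 1/2) * x)) N
  = cos (x/2) - cos ((INR (2 * N) + 3/2) * x).
Proof.
  induction N as [|N IH].
  - simpl. rewrite prod_sin_sin.
    replace ((0 + 1/2) * x - x) with (- (x/2)) by field. rewrite cos_neg.
    f_equal. f_equal. field.
  - rewrite tech5, Rmult_plus_distr_l, IH, prod_sin_sin.
    replace (INR (2 * S N)) with (INR (2 * N) + 2) by (rewrite !mult_INR, (S_INR N); simpl (INR 2); ring).
    replace ((INR (2 * N) + 2 + 1/2) * x - x) with ((INR (2 * N) + 3/2) * x) by field.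
    replace ((INR (2 * N) + 2 + 1/2) * x + x) with ((INR (2 * N) + 2 + 3/2) * x) by field.
    ring.
Qed.

Lemma S_sin_0_closed x n :
  2 * sin x * S_sin 0 n x
  = cos (x/2) - cos ((INR (2 * Nat.div2 n) + 3/2) * x).
Proof.
  rewrite <- sin_telescope. f_equal. unfold S_sin. rewrite sum_even_terms.
  apply sum_eq. intros j _. rewrite C_n_0. ring.
Qed.

(* The Fejer-type kernel whose values make up 4 sin^2 x * S_sin 1 n x. *)
Definition fejer_G (x : R) (k : nat) : R :=
  cos (x/2) * (INR k * sin x - sin (INR k * x))
  + sin (x/2) * (1 - cos (INR k * x)).

Lemma fejer_G_0 x : fejer_G x 0 = 0.
Proof. unfold fejer_G. simpl INR. rewrite !Rmult_0_l, sin_0, cos_0. ring. Qed.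

Lemma fejer_G_step x k :
  fejer_G x (S (S k)) - fejer_G x k
  = 2 * sin x * (cos (x/2) - cos ((INR k + 3/2) * x)).
Proof.
  unfold fejer_G. set (a := (INR k + 1) * x).
  replace (INR (S (S k)) * x) with (a + x) by (unfold a; rewrite !S_INR; ring).
  replace (INR k * x) with (a - x) by (unfold a; ring).
  replace ((INR k + 3/2) * x) with (a + x/2) by (unfold a; field).
  rewrite !S_INR, sin_plus, sin_minus, !cos_plus, cos_minus. ring.
Qed.

Lemma sin_mult_bound k t : Rabs (sin (INR k * t)) <= INR k * Rabs (sin t).
Proof.
  induction k as [|k IH].
  - simpl. rewrite Rmult_0_l, sin_0, Rabs_R0. lra.
  - rewrite S_INR. replace ((INR k + 1) * t) with (INR k * t + t) by ring.
    rewrite sin_plus.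
    assert (Hc1 : Rabs (cos t) <= 1)
      by (pose proof (COS_bound t); apply Rabs_le; lra).
    assert (Hc2 : Rabs (cos (INR k * t)) <= 1)
      by (pose proof (COS_bound (INR k * t)); apply Rabs_le; lra).
    pose proof (Rabs_triang (sin (INR k * t) * cos t) (cos (INR k * t) * sin t)).
    rewrite !Rabs_mult in *.
    pose proof (Rabs_pos (sin (INR k * t))). pose proof (Rabs_pos (sin t)).
    nra.
Qed.

(* Both brackets in fejer_G are nonnegative, and they cannot vanish together. *)
Lemma fejer_G_pos x k : 0 < x < PI -> (1 <= k)%nat -> 0 < fejer_G x k.
Proof.
  intros Hx Hk. unfold fejer_G.
  assert (cy : 0 < cos (x/2)) by (apply cos_gt_0; lra).
  assert (sy : 0 < sin (x/2)) by (apply sin_gt_0; lra).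
  assert (sx : 0 < sin x) by (apply sin_gt_0; lra).
  assert (kpos : 0 < INR k) by (apply lt_0_INR; lia).
  pose proof (sin_mult_bound k x) as B. rewrite (Rabs_right (sin x)) in B by lra.
  pose proof (sin2_cos2 (INR k * x)) as P. unfold Rsqr in P.
  pose proof (COS_bound (INR k * x)).
  set (s := sin (INR k * x)) in *. set (c := cos (INR k * x)) in *.
  assert (s <= INR k * sin x) by (pose proof (Rle_abs s); lra).
  destruct (Rlt_or_le c 1) as [Hc|Hc].
  - assert (0 <= cos (x/2) * (INR k * sin x - s)) by (apply Rmult_le_pos; lra).
    assert (0 < sin (x/2) * (1 - c)) by (apply Rmult_lt_0_compat; lra).
    lra.
  - assert (Ec : c = 1) by lra.
    assert (s = 0) by nra.
    assert (0 < cos (x/2) * (INR k * sin x - s)) by (apply Rmult_lt_0_compat; nra).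
    rewrite Ec. lra.
Qed.

Lemma fejer_G_nonneg x k : 0 < x < PI -> 0 <= fejer_G x k.
Proof.
  intros Hx. destruct k as [|k].
  - rewrite fejer_G_0. lra.
  - apply Rlt_le, fejer_G_pos; [assumption|lia].
Qed.

Lemma double_div2_SS n : (2 * Nat.div2 (S (S n)) = S (S (2 * Nat.div2 n)))%nat.
Proof.
  change (Nat.div2 (S (S n))) with (S (Nat.div2 n)).
  generalize (Nat.div2 n). intro d. lia.
Qed.

Lemma S_sin_1_closed x n :
  4 * sin x ^ 2 * S_sin 1 n x
  = fejer_G x (2 * Nat.div2 (S n)) + fejer_G x (2 * Nat.div2 (S (S n))).
Proof.
  induction n as [|n IH].
  - simpl (2 * _)%nat. rewrite fejer_G_0.
    pose proof (fejer_G_step x 0) as Step. rewrite fejer_G_0 in Step. simpl INR in Step.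
    pose proof (S_sin_0_closed x 0) as D. simpl INR in D.
    replace (4 * sin x ^ 2 * S_sin 1 0 x) with (2 * sin x * (2 * sin x * S_sin 0 0 x))
      by (rewrite !S_sin_at_0; ring).
    rewrite D. lra.
  - rewrite S_sin_pascal.
    replace (4 * sin x ^ 2 * (S_sin 1 n x + S_sin 0 (S n) x))
      with (4 * sin x ^ 2 * S_sin 1 n x + 2 * sin x * (2 * sin x * S_sin 0 (S n) x))
      by ring.
    rewrite IH, S_sin_0_closed, (double_div2_SS (S n)).
    pose proof (fejer_G_step x (2 * Nat.div2 (S n))). lra.
Qed.

Lemma S_sin_1_pos x n : 0 < x < PI -> 0 < S_sin 1 n x.
Proof.
  intros Hx.
  assert (sx : 0 < sin x) by (apply sin_gt_0; lra).
  assert (w : 0 < 4 * sin x ^ 2) by nra.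
  apply (Rmult_lt_reg_l (4 * sin x ^ 2)); [exact w|].
  rewrite Rmult_0_r, S_sin_1_closed.
  pose proof (fejer_G_nonneg x (2 * Nat.div2 (S n)) Hx).
  assert (0 < fejer_G x (2 * Nat.div2 (S (S n)))).
  { apply fejer_G_pos; [assumption|]. rewrite double_div2_SS. auto with arith. }
  lra.
Qed.

Lemma S_sin_pos m n x : (1 <= m)%nat -> 0 < x < PI -> 0 < S_sin m n x.
Proof.
  intros Hm Hx. revert n. induction Hm as [|m _ IH]; intro n.
  - now apply S_sin_1_pos.
  - induction n as [|n IHn].
    + rewrite S_sin_at_0. apply sin_gt_0; lra.
    + rewrite S_sin_pascal. specialize (IH (S n)). lra.
Qed.

Lemma S_sin_1_small m eps :
  0 < eps -> exists x, 0 < x < PI /\ S_sin m 1 x < eps.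
Proof.
  intros He. set (c := C (S m) m). assert (Hc : 0 < c) by apply C_pos.
  set (x := Rmin 1 (eps / c)).
  assert (x_pos : 0 < x)
    by (apply Rmin_glb_lt; [lra|apply Rdiv_lt_0_compat; assumption]).
  assert (x_le_1 : x <= 1) by apply Rmin_l.
  assert (cx_le : c * x <= eps).
  { replace eps with (c * (eps / c)) by (field; lra).
    apply Rmult_le_compat_l; [lra|apply Rmin_r]. }
  pose proof PI2_3_2.
  exists x. split; [lra|].
  rewrite S_sin_at_1. fold c.
  assert (sin (x/2) < x/2) by (apply sin_lt_x; lra).
  nra.
Qed.

Theorem theorem3 (m : nat) (Hm : (1 <= m)%nat) :
  (forall (n : nat) (x : R), (1 <= n)%nat -> 0 < x < PI ->
     0 < S_cos m n x /\ 0 < S_sin m n x) /\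
  (forall eps : R, 0 < eps ->
     exists (n : nat) (x : R), (1 <= n)%nat /\ 0 < x < PI /\ S_cos m n x < eps) /\
  (forall eps : R, 0 < eps ->
     exists (n : nat) (x : R), (1 <= n)%nat /\ 0 < x < PI /\ S_sin m n x < eps).
Proof.
  split; [|split].
  - intros n x _ Hx. rewrite S_cos_reflect.
    split; apply S_sin_pos; auto; lra.
  - intros eps He. destruct (S_sin_1_small m eps He) as [x [Hx Hs]].
    exists 1%nat, (PI - x). rewrite S_cos_reflect.
    replace (PI - (PI - x)) with x by ring. repeat split; auto; lra.
  - intros eps He. destruct (S_sin_1_small m eps He) as [x [Hx Hs]].
    exists 1%nat, x. auto.
Qed.
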